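(* Let $G$ have a RAAG-like action on the CAT(0) cube complex $X$, let $g\in G$ be hyperbolic and $o$ a vertex with $d^c(o,go)=\delta(g)$. Let $\gamma$ be a maximal $g$-nested segment in $[o,go]$, let $\phi_\gamma:G\to\mathbb R$, $\phi_\gamma(h)=\omega_\gamma(o,ho)$, and let $\overline\phi_\gamma(h)=\lim_{n\to\infty}\phi_\gamma(h^n)/n$ be its homogenisation. Then $\overline{\phi}_{\gamma}(g)\ge 1$.
   Context: $\mathcal{H}(X)$ is the set of halfspaces, $\overline\Phi$ the complement of $\Phi$. Two halfspaces are nested if one of $\Phi\subseteq\Psi$, $\overline{\Phi}\subseteq\Psi$, $\Phi\subseteq\overline{\Psi}$, $\overline{\Phi}\subseteq\overline{\Psi}$ holds, transverse otherwise; tightly nested means nested with no halfspace strictly in between for the relevant strict inclusion; $\Phi\supsetneq\Psi$ tightly means $\Phi\supsetneq\Psi$ and no $\Phi'$ has $\Phi\supsetneq\Phi'\supsetneq\Psi$. The action is RAAG-like if: (i) no $\Phi$, $h\in G$ with $h\overline\Phi=\Phi$; (ii) no $\Phi$, $h$ with $\Phi$, $h\Phi$ transverse; (iii) no tightly nested $\Phi,\Phi'$ and $h$ with $\Phi$, $h\Phi'$ transverse; (iv) no $\Phi$, $h$ with $\Phi\subsetneq h\overline\Phi$ tightly. $d^c$ is the combinatorial distance on vertices, $\delta(g)=\min_x d^c(x,gx)$, $g$ hyperbolic if $\delta(g)>0$. For vertices $x,y$, $[x,y]=\{\Phi: x\notin\Phi,\ y\in\Phi\}$. A segment is a finite sequence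 $\gamma=(\Phi_0,\dots,\Phi_r)$ of halfspaces with $\Phi_i\supsetneq\Phi_{i+1}$ tightly; its reverse is $\overline\gamma=(\overline\Phi_r,\dots,\overline\Phi_0)$; copies of $\gamma$ are $h\gamma=(h\Phi_0,\dots,h\Phi_r)$, $h\in G$. Two segments overlap if some halfspace of one is equal or transverse to some halfspace of the other. A segment is in $[x,y]$ if all its halfspaces lie in $[x,y]$. $c_\gamma(x,y)$ is the largest cardinality of a set of pairwise non-overlapping copies of $\gamma$ in $[x,y]$, and $\omega_\gamma(x,y)=c_\gamma(x,y)-c_{\overline\gamma}(x,y)$. For segments $\gamma=(\Phi_0,\dots,\Phi_r)$, $\gamma'=(\Psi_0,\dots,\Psi_s)$ write $\gamma>\gamma'$ if $\Phi_r\supsetneq\Psi_0$. A segment $\gamma$ in $[o,go]$ is $g$-nested if $\gamma>g\gamma$; it is maximal $g$-nested if no other $g$-nested segment in $[o,go]$ contains (all halfspaces of) $\gamma$. *)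

From Stdlib Require Import Reals List Arith ClassicalEpsilon.
Import ListNotations.
Open Scope R_scope.
Set Implicit Arguments.
Unset Strict Implicit.

(* The CAT(0) cube complex X is given through its 1-skeleton, which   *)
(* is a median graph (Chepoi / Roller / Gerasimov): vertices V, edge  *)
(* relation adj.                                                      *)
Section CubeComplex.
Variable V : Type.
Variable adj : V -> V -> Prop.

Inductive walk : V -> V -> nat -> Prop :=
| walk0 : forall x, walk x x 0
| walkS : forall x y z n, adj x y -> walk y z n -> walk x z (S n).

Definition dc (x y : V) : nat :=
  epsilon (inhabits 0%nat)
    (fun n => walk x y n /\ forall m, walk x y m -> (n <= m)%nat).

Record median_graph : Prop := {
  mg_sym : forall x y, adj x y -> adj y x;
  mg_irrefl : forall x, ~ adj x x;
  mg_conn : forall x y, exists n, walk x y n;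
  mg_median : forall x y z, exists m,
      (dc x m + dc m y = dc x y)%nat /\ (dc y m + dc m z = dc y z)%nat /\
      (dc x m + dc m z = dc x z)%nat /\
      forall m', (dc x m' + dc m' y = dc x y)%nat ->
                 (dc y m' + dc m' z = dc y z)%nat ->
                 (dc x m' + dc m' z = dc x z)%nat -> m' = m }.

(* halfspaces, as sets of vertices: the side of the hyperplane dual to
   the edge (a,b) that contains a *)
Definition hspace := V -> Prop.
Definition is_halfspace (P : hspace) : Prop :=
  exists a b, adj a b /\ P = (fun x => (dc x a < dc x b)%nat).

Definition hcompl (P : hspace) : hspace := fun x => ~ P x.
Definition hsub (P Q : hspace) : Prop := forall x, P x -> Q x.
Definition hssub (P Q : hspace) : Prop := hsub P Q /\ P <> Q.
Definition tight_ssub (P Q : hspace) : Prop :=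
  hssub P Q /\ ~ (exists R, is_halfspace R /\ hssub P R /\ hssub R Q).

Definition nested (P Q : hspace) : Prop :=
  hsub P Q \/ hsub (hcompl P) Q \/ hsub P (hcompl Q) \/ hsub (hcompl P) (hcompl Q).
Definition transverse (P Q : hspace) : Prop := ~ nested P Q.
Definition tightly_nested (P Q : hspace) : Prop :=
  tight_ssub P Q \/ tight_ssub (hcompl P) Q \/ tight_ssub P (hcompl Q) \/
  tight_ssub (hcompl P) (hcompl Q).

Definition in_interval (x y : V) (P : hspace) : Prop := ~ P x /\ P y.

Fixpoint tight_chain (l : list hspace) : Prop :=
  match l with
  | P :: ((Q :: _) as l') => tight_ssub Q P /\ tight_chain l'
  | _ => True
  end.
Definition segment (s : list hspace) : Prop :=
  s <> [] /\ Forall is_halfspace s /\ tight_chain s.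
Definition seg_rev (s : list hspace) : list hspace := map hcompl (rev s).
Definition seg_overlap (s t : list hspace) : Prop :=
  exists P Q, In P s /\ In Q t /\ (P = Q \/ transverse P Q).
Definition seg_in (x y : V) (s : list hspace) : Prop :=
  forall P, In P s -> in_interval x y P.
Definition seg_contains (big small : list hspace) : Prop :=
  forall P, In P small -> In P big.
Definition seg_gt (s t : list hspace) : Prop :=
  exists P Q, hd_error (rev s) = Some P /\ hd_error t = Some Q /\ hssub Q P.

End CubeComplex.

Section Action.
Variable G : Type.
Variable mul : G -> G -> G.
Variable one : G.
Variable inv : G -> G.
Variable V : Type.
Variable adj : V -> V -> Prop.
Variable act : G -> V -> V.

Record is_group : Prop := {
  g_assoc : forall a b c, mul a (mul b c) = mul (mul a b) c;
  g_one_l : forall a, mul one a = a;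
  g_one_r : forall a, mul a one = a;
  g_inv_l : forall a, mul (inv a) a = one;
  g_inv_r : forall a, mul a (inv a) = one }.

(* action by graph automorphisms (= cubical automorphisms of X) *)
Record is_action : Prop := {
  act_one : forall x, act one x = x;
  act_mul : forall a b x, act (mul a b) x = act a (act b x);
  act_adj : forall a x y, adj x y <-> adj (act a x) (act a y) }.

Fixpoint gpow (g : G) (n : nat) : G :=
  match n with O => one | S k => mul g (gpow g k) end.

Definition hs_act (h : G) (P : hspace V) : hspace V :=
  fun x => exists y, P y /\ act h y = x.
Definition seg_act (h : G) (s : list (hspace V)) : list (hspace V) :=
  map (hs_act h) s.

Definition delta (g : G) : nat :=
  epsilon (inhabits 0%nat)
    (fun n => (exists x, dc adj x (act g x) = n) /\
              forall x, (n <= dc adj x (act g x))%nat).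
Definition hyperbolic (g : G) : Prop := (0 < delta g)%nat.

Record raag_like : Prop := {
  rl1 : ~ exists P h, is_halfspace adj P /\ hs_act h (hcompl P) = P;
  rl2 : ~ exists P h, is_halfspace adj P /\ transverse P (hs_act h P);
  rl3 : ~ exists P P' h, is_halfspace adj P /\ is_halfspace adj P' /\
          tightly_nested adj P P' /\ transverse P (hs_act h P');
  rl4 : ~ exists P h, is_halfspace adj P /\ tight_ssub adj P (hs_act h (hcompl P)) }.

Definition admissible_copies (gam : list (hspace V)) (x y : V)
    (S : list (list (hspace V))) : Prop :=
  NoDup S /\
  (forall s, In s S -> (exists h, s = seg_act h gam) /\ seg_in x y s) /\
  (forall s t, In s S -> In t S -> s <> t -> ~ seg_overlap s t).

Definition c_seg (gam : list (hspace V)) (x y : V) : nat :=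
  epsilon (inhabits 0%nat)
    (fun n => (exists S, admissible_copies gam x y S /\ length S = n) /\
              forall S, admissible_copies gam x y S -> (length S <= n)%nat).

Definition omega (gam : list (hspace V)) (x y : V) : R :=
  INR (c_seg gam x y) - INR (c_seg (seg_rev gam) x y).

Definition phi (gam : list (hspace V)) (o : V) (h : G) : R :=
  omega gam o (act h o).

Definition g_nested (g : G) (o : V) (gam : list (hspace V)) : Prop :=
  segment adj gam /\ seg_in o (act g o) gam /\ seg_gt gam (seg_act g gam).

Definition max_g_nested (g : G) (o : V) (gam : list (hspace V)) : Prop :=
  g_nested g o gam /\
  forall gam', g_nested g o gam' -> seg_contains gam' gam -> gam' = gam.

End Action.

(* Since [o] is minimally displaced, the RAAG-like conditions (i) and (ii) show
   that [g] maps every halfspace separating [o] from [g o] strictly into itself.  Hence the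
   translates [g^k gam], [0 <= k < N], are pairwise strictly nested, so non-overlapping,
   copies of [gam] in [[o, g^N o]], and [c_gam(o, g^N o) >= N].  No copy [h gam-bar] lies in
   [[o, g^N o]]: after translating by a power of [g] its first halfspace lies strictly between
   [g Phi_0] and [Phi_0], and then conditions (i)-(iv) push each [h Phi_j-bar] just below
   [Phi_j]; in the end [h Phi_r-bar] lies strictly between [g Phi_0] and [Phi_r], which
   contradicts the maximality of [gam].  So [phi_gam(g^N) >= N] for every [N]. *)

From Stdlib Require Import Reals List Arith Lia Lra.
From Stdlib Require Import Classical ClassicalEpsilon FunctionalExtensionality PropExtensionality.
Import ListNotations.
Set Implicit Arguments.

Local Open Scope nat_scope.

Lemma nat_least (P : nat -> Prop) :
  (exists n, P n) -> exists n, P n /\ forall m, P m -> n <= m.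
Proof.
  intros [n Hn]. induction n as [n IH] using lt_wf_ind.
  destruct (classic (exists m, P m /\ m < n)) as [[m [Hm Hmn]]|Hno].
  - exact (IH m Hmn Hm).
  - exists n. split; [exact Hn|]. intros m Hm.
    apply Nat.nlt_ge. intro Hmn. apply Hno. eauto.
Qed.

Lemma nat_greatest (P : nat -> Prop) (B : nat) :
  (exists n, P n) -> (forall n, P n -> n <= B) -> exists n, P n /\ forall m, P m -> m <= n.
Proof.
  intros [n Hn] HB.
  destruct (nat_least (fun k => P (B - k))) as [k [Hk Hleast]].
  { exists (B - n). replace (B - (B - n)) with n by (specialize (HB n Hn); lia). exact Hn. }
  exists (B - k). split; [exact Hk|]. intros m Hm.
  specialize (HB m Hm). specialize (Hleast (B - m)).
  replace (B - (B - m)) with m in Hleast by lia. specialize (Hleast Hm). lia.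
Qed.

Lemma nat_crossing (P : nat -> Prop) (N : nat) :
  ~ P 0 -> P N -> exists m, ~ P m /\ P (S m).
Proof.
  induction N as [|N IH]; intros H0 HN; [contradiction|].
  destruct (classic (P N)) as [H|H]; [exact (IH H0 H)|eauto].
Qed.

Lemma finite_maximal (T : Type) (lt : T -> T -> Prop) (L : list T) (C : T -> Prop) :
  (forall x, ~ lt x x) -> (forall x y z, lt x y -> lt y z -> lt x z) ->
  (forall x, C x -> In x L) -> (exists x, C x) ->
  exists m, C m /\ forall y, C y -> ~ lt m y.
Proof.
  intros Hirr Htrans. revert C. induction L as [|a L IH]; intros C HL [x Hx].
  { destruct (HL x Hx). }
  destruct (classic (exists y, C y /\ In y L)) as [Hex|Hno].
  - destruct (IH (fun y => C y /\ In y L)) as [m [[Hm HmL] Hmax]]; [tauto|exact Hex|].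
    destruct (classic (C a /\ lt m a)) as [[Ha Hma]|Hma].
    + exists a. split; [exact Ha|]. intros y Hy Hay.
      destruct (HL y Hy) as [<-|HyL]; [exact (Hirr a Hay)|].
      exact (Hmax y (conj Hy HyL) (Htrans _ _ _ Hma Hay)).
    + exists m. split; [exact Hm|]. intros y Hy Hmy.
      destruct (HL y Hy) as [<-|HyL]; [tauto|exact (Hmax y (conj Hy HyL) Hmy)].
  - assert (Honly : forall y, C y -> y = a).
    { intros y Hy. destruct (HL y Hy) as [<-|HyL]; [reflexivity|].
      exfalso. exact (Hno (ex_intro _ y (conj Hy HyL))). }
    exists a. rewrite <- (Honly x Hx). split; [exact Hx|].
    intros y Hy. rewrite (Honly y Hy), <- (Honly x Hx). apply Hirr.
Qed.

Lemma last_nth (A : Type) (l : list A) (d : A) : l <> [] -> last l d = nth (length l - 1) l d.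
Proof.
  induction l as [|a [|b l] IH]; intro Hne; [congruence|reflexivity|].
  change (last (b :: l) d = nth (length l) (b :: l) d).
  rewrite IH by discriminate. simpl. rewrite Nat.sub_0_r. reflexivity.
Qed.

Lemma last_cons_nonempty (A : Type) (a : A) (l : list A) (d : A) :
  l <> [] -> last (a :: l) d = last l d.
Proof. destruct l; [congruence|reflexivity]. Qed.

Section Segments.
Variable V : Type.
Variable adj : V -> V -> Prop.

Lemma seg_gt_iff (s t : list (hspace V)) (d d' : hspace V) :
  s <> [] -> t <> [] -> seg_gt s t <-> hssub (nth 0 t d) (last s d').
Proof.
  intros Hs Ht.
  assert (Hlast : hd_error (rev s) = Some (last s d')).
  { rewrite (app_removelast_last d' Hs) at 1. rewrite rev_unit. reflexivity. }
  destruct t as [|Q t]; [congruence|].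
  unfold seg_gt. rewrite Hlast. simpl. split.
  - intros (P & Q' & HP & HQ & Hsub). congruence.
  - intro Hsub. eauto.
Qed.

Lemma seg_gt_seg_act (G : Type) (act : G -> V -> V) (h : G) (l : list (hspace V)) (d : hspace V) :
  l <> [] -> seg_gt l (seg_act act h l) <-> hssub (hs_act act h (nth 0 l d)) (last l d).
Proof.
  intro Hl. unfold seg_act. rewrite (seg_gt_iff (hs_act act h d) d Hl), map_nth; [reflexivity|].
  intro E. exact (Hl (map_eq_nil _ _ E)).
Qed.

Lemma tight_chain_cons (l : list (hspace V)) (R d : hspace V) :
  l <> [] -> tight_chain adj l -> tight_ssub adj (nth 0 l d) R -> tight_chain adj (R :: l).
Proof. destruct l; [congruence|]. intros _ Hc HR. exact (conj HR Hc). Qed.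

Lemma tight_chain_nth (l : list (hspace V)) (d : hspace V) (i : nat) :
  tight_chain adj l -> S i < length l -> tight_ssub adj (nth (S i) l d) (nth i l d).
Proof.
  revert i. induction l as [|a [|b l] IH]; intros i Hc Hi; simpl in Hi; try lia.
  destruct Hc as [Hab Hc]. destruct i as [|i]; [exact Hab|].
  apply (IH i Hc). simpl. lia.
Qed.

Lemma tight_chain_snoc (l : list (hspace V)) (R d : hspace V) :
  l <> [] -> tight_chain adj l -> tight_ssub adj R (last l d) -> tight_chain adj (l ++ [R]).
Proof.
  induction l as [|a [|b l] IH]; intros Hne Hc HR; [congruence|simpl; tauto|].
  destruct Hc as [Hab Hc]. split; [exact Hab|].
  apply IH; [discriminate|exact Hc|exact HR].
Qed.

End Segments.

Section HalfspaceAlgebra.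
Variable V : Type.
Implicit Types P Q R : hspace V.

Lemma hs_ext P Q : (forall x, P x <-> Q x) -> P = Q.
Proof. intro H. extensionality x. apply propositional_extensionality. apply H. Qed.

Lemma hcompl_involutive P : hcompl (hcompl P) = P.
Proof. apply hs_ext. intro x. unfold hcompl. split; [apply NNPP|tauto]. Qed.

Lemma hsub_refl P : hsub P P.
Proof. intros x Hx. exact Hx. Qed.

Lemma hsub_trans P Q R : hsub P Q -> hsub Q R -> hsub P R.
Proof. unfold hsub. auto. Qed.

Lemma hsub_antisym P Q : hsub P Q -> hsub Q P -> P = Q.
Proof. intros H1 H2. apply hs_ext. split; auto. Qed.

Lemma hsub_compl P Q : hsub P Q -> hsub (hcompl Q) (hcompl P).
Proof. unfold hsub, hcompl. auto. Qed.

Lemma hsub_compl_iff P Q : hsub (hcompl Q) (hcompl P) <-> hsub P Q.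
Proof.
  split; [|apply hsub_compl].
  intro H. rewrite <- (hcompl_involutive P), <- (hcompl_involutive Q). apply hsub_compl, H.
Qed.

Lemma hssub_of_hsub P Q : hsub P Q -> P <> Q -> hssub P Q.
Proof. split; assumption. Qed.

Lemma hssub_irrefl P : ~ hssub P P.
Proof. intros [_ H]. apply H. reflexivity. Qed.

Lemma hssub_compl P Q : hssub P Q -> hssub (hcompl Q) (hcompl P).
Proof.
  intros [Hsub Hne]. split; [apply hsub_compl, Hsub|].
  intro E. apply Hne. rewrite <- (hcompl_involutive P), <- E. apply hcompl_involutive.
Qed.

Lemma hssub_trans_l P Q R : hssub P Q -> hsub Q R -> hssub P R.
Proof.
  intros [HPQ Hne] HQR. split; [exact (hsub_trans HPQ HQR)|].
  intros ->. apply Hne. apply hsub_antisym; assumption.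
Qed.

Lemma hssub_trans_r P Q R : hsub P Q -> hssub Q R -> hssub P R.
Proof.
  intros HPQ [HQR Hne]. split; [exact (hsub_trans HPQ HQR)|].
  intros ->. apply Hne. apply hsub_antisym; assumption.
Qed.

Lemma hssub_not_overlap P Q : hssub P Q \/ hssub Q P -> ~ (P = Q \/ transverse P Q).
Proof.
  intros Hs [->|Htr]; [destruct Hs as [H|H]; exact (hssub_irrefl H)|].
  apply Htr. destruct Hs as [[H _]|[H _]]; [left; exact H|].
  right; right; right. apply hsub_compl, H.
Qed.

Lemma nested_comparable P Q x y :
  nested P Q -> P x -> Q x -> ~ P y -> ~ Q y -> hsub P Q \/ hsub Q P.
Proof.
  unfold nested, hsub, hcompl. intros [H|[H|[H|H]]] Px Qx Py Qy; auto.
  - exfalso. exact (Qy (H y Py)).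
  - exfalso. exact (H x Px Qx).
  - right. intros z Qz. apply NNPP. intro Pz. exact (H z Pz Qz).
Qed.

Lemma transverse_compl_r P Q : transverse P (hcompl Q) -> transverse P Q.
Proof.
  unfold transverse, nested. intros H1 H2. apply H1. rewrite hcompl_involutive. tauto.
Qed.

End HalfspaceAlgebra.

Section MedianGraph.
Variable V : Type.
Variable adj : V -> V -> Prop.
Hypothesis HX : median_graph adj.

Local Notation d := (dc adj).
Local Notation walk := (walk adj).

Lemma walk_app x y z n m : walk x y n -> walk y z m -> walk x z (n + m).
Proof. induction 1; intros; simpl; [assumption|econstructor; eauto]. Qed.

Lemma walk_one x y : adj x y -> walk x y 1.
Proof. intro H. econstructor; [exact H|constructor]. Qed.

Lemma walk_sym x y n : walk x y n -> walk y x n.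
Proof.
  induction 1 as [|x y z n Hxy _ IH]; [constructor|].
  replace (S n) with (n + 1) by lia. apply (walk_app IH), walk_one, (mg_sym HX), Hxy.
Qed.

Lemma dc_spec x y : walk x y (d x y) /\ forall m, walk x y m -> d x y <= m.
Proof. unfold dc. apply epsilon_spec, nat_least, (mg_conn HX). Qed.

Lemma dc_walk x y : walk x y (d x y).
Proof. apply dc_spec. Qed.

Lemma dc_le x y m : walk x y m -> d x y <= m.
Proof. apply dc_spec. Qed.

Lemma dc_sym x y : d x y = d y x.
Proof. apply Nat.le_antisymm; apply dc_le, walk_sym, dc_walk. Qed.

Lemma dc_triangle x y z : d x z <= d x y + d y z.
Proof. apply dc_le, (walk_app (dc_walk x y) (dc_walk y z)). Qed.

Lemma dc_refl x : d x x = 0.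
Proof. pose proof (dc_le (walk0 adj x)). lia. Qed.

Lemma dc_eq0 x y : d x y = 0 -> x = y.
Proof. intro H. pose proof (dc_walk x y) as Hw. rewrite H in Hw. inversion Hw. reflexivity. Qed.

Lemma dc_adj x y : adj x y -> d x y = 1.
Proof.
  intro H. pose proof (dc_le (walk_one H)).
  destruct (d x y) eqn:E; [|lia].
  apply dc_eq0 in E. subst y. destruct (mg_irrefl HX H).
Qed.

(* The median of [x], [a], [b] is [a] or [b], whence the graph is bipartite. *)
Lemma dc_adj_cases x a b : adj a b -> d x b = S (d x a) \/ d x a = S (d x b).
Proof.
  intro Hab. pose proof (dc_adj Hab) as Hab1. pose proof (dc_adj (mg_sym HX Hab)) as Hba1.
  destruct (mg_median HX x a b) as (m & Hxa & Hab' & Hxb & _).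
  destruct (d a m) eqn:E.
  - apply dc_eq0 in E. subst m. rewrite dc_refl in Hxa. left. lia.
  - assert (Hmb : d m b = 0) by lia. apply dc_eq0 in Hmb. subst m.
    rewrite dc_refl in Hxb. right. lia.
Qed.

Definition between x y z : Prop := d x z + d z y = d x y.

Definition is_median x y z m : Prop := between x y m /\ between y z m /\ between x z m.

Lemma median_exists x y z : exists m, is_median x y z m.
Proof.
  destruct (mg_median HX x y z) as (m & H1 & H2 & H3 & _). exists m.
  repeat split; assumption.
Qed.

Lemma median_unique x y z m m' : is_median x y z m -> is_median x y z m' -> m = m'.
Proof.
  destruct (mg_median HX x y z) as (m0 & _ & _ & _ & Huniq).
  intros (H1 & H2 & H3) (H1' & H2' & H3'). unfold between in *.
  rewrite (Huniq m), (Huniq m'); [reflexivity|assumption..].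
Qed.

Definition side (a b : V) : hspace V := fun x => d x a < d x b.

Lemma side_compl a b : adj a b -> hcompl (side a b) = side b a.
Proof.
  intro Hab. apply hs_ext. intro x. unfold hcompl, side.
  pose proof (dc_adj_cases x Hab). lia.
Qed.

Lemma side_between a b x z : adj a b -> side a b x -> between x a z -> side a b z.
Proof.
  intros Hab Hx Hz. unfold side, between in *.
  pose proof (dc_adj_cases x Hab). pose proof (dc_adj_cases z Hab).
  pose proof (dc_triangle x z b). lia.
Qed.

(* Otherwise the median of [x], [y], [b] would be reached through [z] on the [b] side, and
   also as the median of [x], [y], [a] on the [a] side. *)
Lemma side_convex a b x y z : adj a b -> side a b x -> side a b y -> between x y z -> side a b z.
Proof.
  intros Hab Hx Hy Hz. apply NNPP. intro Hzn.
  assert (Hba : adj b a) by exact (mg_sym HX Hab).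
  assert (Hz' : side b a z).
  { unfold side in *. pose proof (dc_adj_cases z Hab). lia. }
  destruct (median_exists x z b) as [u (Hu1 & Hu2 & Hu3)].
  assert (Hu : side b a u) by (apply (side_between Hba Hz'); unfold between in *; lia).
  destruct (median_exists y u b) as [v (Hv1 & Hv2 & Hv3)].
  assert (Hv : side b a v) by (apply (side_between Hba Hu); unfold between in *; lia).
  destruct (median_exists x y a) as [m (Hm1 & Hm2 & Hm3)].
  assert (Hm : side a b m) by (apply (side_between Hab Hx); exact Hm3).
  assert (Hmed_v : is_median x y b v).
  { unfold is_median, between in *.
    pose proof (dc_sym u v). pose proof (dc_sym u y). pose proof (dc_sym v y).
    pose proof (dc_triangle u z y). pose proof (dc_triangle x u v).
    pose proof (dc_triangle x v y). pose proof (dc_triangle x v b). lia. }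
  assert (Hmed_m : is_median x y b m).
  { unfold is_median, side, between in *.
    pose proof (dc_adj_cases x Hab). pose proof (dc_adj_cases y Hab).
    pose proof (dc_adj_cases m Hab). lia. }
  rewrite (median_unique Hmed_v Hmed_m) in Hv.
  unfold side in *. lia.
Qed.

Lemma side_of_crossing a b u v :
  adj a b -> adj u v -> ~ side a b u -> side a b v -> side a b = side v u.
Proof.
  intros Hab Huv Hu Hv. pose proof (dc_adj Huv) as Huv1.
  pose proof (dc_adj (mg_sym HX Huv)) as Hvu1.
  apply hs_ext. intro x. split; intro Hx.
  - apply NNPP. intro Hxn. apply Hu. apply (side_convex Hab Hx Hv).
    unfold side, between in *. pose proof (dc_adj_cases x Huv). lia.
  - apply NNPP. intro Hxn.
    assert (Hbx : side b a x) by (unfold side in *; pose proof (dc_adj_cases x Hab); lia).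
    assert (Hbu : side b a u) by (unfold side in *; pose proof (dc_adj_cases u Hab); lia).
    assert (Hbv : side b a v).
    { apply (side_convex (mg_sym HX Hab) Hbx Hbu).
      unfold side, between in *. pose proof (dc_adj_cases x Huv). lia. }
    unfold side in *. lia.
Qed.

Lemma halfspace_of_crossing P u v : is_halfspace adj P -> adj u v -> ~ P u -> P v -> P = side v u.
Proof. intros (a & b & Hab & ->). apply side_of_crossing; assumption. Qed.

Lemma halfspace_compl P : is_halfspace adj P -> is_halfspace adj (hcompl P).
Proof.
  intros (a & b & Hab & ->). exists b, a.
  split; [exact (mg_sym HX Hab)|apply side_compl, Hab].
Qed.

Lemma walk_crossing P x y n : walk x y n -> is_halfspace adj P -> ~ P x -> P y ->
  exists i u v k, walk x u i /\ adj u v /\ walk v y k /\ i + 1 + k = n /\ P = side v u.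
Proof.
  induction 1 as [x|x y z n Hxy Hw IH]; intros HP Hx Hz; [contradiction|].
  destruct (classic (P y)) as [Hy|Hy].
  - exists 0, x, y, n. split; [constructor|]. split; [exact Hxy|].
    split; [exact Hw|]. split; [lia|]. apply halfspace_of_crossing; assumption.
  - destruct (IH HP Hy Hz) as (i & u & v & k & Hyu & Huv & Hvz & Hn & HPe).
    exists (S i), u, v, k. split; [econstructor; eauto|]. split; [exact Huv|].
    split; [exact Hvz|]. split; [lia|exact HPe].
Qed.

Lemma separating_halfspaces x y : exists L : list (hspace V), length L = d x y /\
  forall P, is_halfspace adj P -> ~ P x -> P y -> In P L.
Proof.
  generalize (dc_walk x y). generalize (d x y). intros n Hw.
  induction Hw as [x|x y z n Hxy Hw IH].
  - exists []. split; [reflexivity|]. intros P _ Hx Hy. contradiction.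
  - destruct IH as [L [HL HinL]]. exists (side y x :: L). split; [simpl; congruence|].
    intros P HP Hx Hz. destruct (classic (P y)) as [Hy|Hy].
    + left. symmetry. apply halfspace_of_crossing; assumption.
    + right. apply HinL; assumption.
Qed.

Lemma tight_ssub_between P Q R :
  tight_ssub adj P Q -> is_halfspace adj R -> hssub P R -> hssub R Q -> False.
Proof. intros [_ Htight] HR HPR HRQ. apply Htight. eauto. Qed.

Lemma tight_ssub_compl P Q : tight_ssub adj P Q -> tight_ssub adj (hcompl Q) (hcompl P).
Proof.
  intros [Hs Ht]. split; [apply hssub_compl, Hs|]. intros (R & HR & H1 & H2). apply Ht.
  exists (hcompl R). split; [apply halfspace_compl, HR|].
  rewrite <- (hcompl_involutive P), <- (hcompl_involutive Q).
  split; apply hssub_compl; assumption.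
Qed.

Section Action.
Variable G : Type.
Variables (mul : G -> G -> G) (one : G) (inv : G -> G).
Hypothesis HG : is_group mul one inv.
Variable act : G -> V -> V.
Hypothesis Hact : is_action mul one adj act.

Local Notation hs := (hs_act act).

Lemma act_inv_l a x : act (inv a) (act a x) = x.
Proof. rewrite <- (act_mul Hact), (g_inv_l HG), (act_one Hact). reflexivity. Qed.

Lemma act_inv_r a x : act a (act (inv a) x) = x.
Proof. rewrite <- (act_mul Hact), (g_inv_r HG), (act_one Hact). reflexivity. Qed.

Lemma hs_act_iff a P x : hs a P x <-> P (act (inv a) x).
Proof.
  split.
  - intros (y & Hy & <-). rewrite act_inv_l. exact Hy.
  - intro H. exists (act (inv a) x). split; [exact H|apply act_inv_r].
Qed.

Lemma hs_act_at a P y : hs a P (act a y) <-> P y.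
Proof. rewrite hs_act_iff, act_inv_l. reflexivity. Qed.

Lemma hs_act_inv_at a P y : hs (inv a) P y <-> P (act a y).
Proof. rewrite <- (act_inv_l a y) at 1. apply hs_act_at. Qed.

Lemma dc_act a x y : d (act a x) (act a y) = d x y.
Proof.
  assert (Hwalk : forall b u w n, walk u w n -> walk (act b u) (act b w) n).
  { induction 1; [constructor|econstructor; [apply (act_adj Hact); eassumption|assumption]]. }
  apply Nat.le_antisymm; [apply dc_le, Hwalk, dc_walk|].
  pose proof (dc_le (Hwalk (inv a) _ _ _ (dc_walk (act a x) (act a y)))) as H.
  rewrite !act_inv_l in H. exact H.
Qed.

Lemma hs_act_side a u v : hs a (side u v) = side (act a u) (act a v).
Proof.
  apply hs_ext. intro x. rewrite hs_act_iff. unfold side.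
  rewrite <- (dc_act a (act (inv a) x) u), <- (dc_act a (act (inv a) x) v), act_inv_r.
  reflexivity.
Qed.

Lemma hs_act_halfspace a P : is_halfspace adj P -> is_halfspace adj (hs a P).
Proof.
  intros (u & v & Huv & ->). exists (act a u), (act a v).
  split; [apply (act_adj Hact), Huv|apply hs_act_side].
Qed.

Lemma hs_act_compl a P : hs a (hcompl P) = hcompl (hs a P).
Proof. apply hs_ext. intro x. unfold hcompl. rewrite !hs_act_iff. reflexivity. Qed.

Lemma hs_act_mul a b P : hs (mul a b) P = hs a (hs b P).
Proof.
  apply hs_ext. intro x. rewrite !hs_act_iff.
  rewrite <- (act_inv_l (mul a b) (act (inv b) (act (inv a) x))).
  rewrite (act_mul Hact a b), act_inv_r, act_inv_r. reflexivity.
Qed.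

Lemma hs_act_one P : hs one P = P.
Proof.
  apply hs_ext. intro x. rewrite <- (act_one Hact x) at 1. apply hs_act_at.
Qed.

Lemma hs_act_inv_l a P : hs (inv a) (hs a P) = P.
Proof. rewrite <- hs_act_mul, (g_inv_l HG). apply hs_act_one. Qed.

Lemma hs_act_inv_r a P : hs a (hs (inv a) P) = P.
Proof. rewrite <- hs_act_mul, (g_inv_r HG). apply hs_act_one. Qed.

Lemma hs_act_sub a P Q : hsub P Q -> hsub (hs a P) (hs a Q).
Proof. intros H x. rewrite !hs_act_iff. apply H. Qed.

Lemma hs_act_ssub a P Q : hssub P Q -> hssub (hs a P) (hs a Q).
Proof.
  intros [Hsub Hne]. split; [apply hs_act_sub, Hsub|].
  intro E. apply Hne. rewrite <- (hs_act_inv_l a P), E. apply hs_act_inv_l.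
Qed.

Lemma hs_act_ssub_iff a P Q : hssub (hs a P) (hs a Q) <-> hssub P Q.
Proof.
  split; [|apply hs_act_ssub].
  intro H. rewrite <- (hs_act_inv_l a P), <- (hs_act_inv_l a Q). apply hs_act_ssub, H.
Qed.

Lemma hs_act_tight_ssub a P Q : tight_ssub adj P Q -> tight_ssub adj (hs a P) (hs a Q).
Proof.
  intros [Hs Ht]. split; [apply hs_act_ssub, Hs|]. intros (R & HR & H1 & H2). apply Ht.
  exists (hs (inv a) R). split; [apply hs_act_halfspace, HR|].
  rewrite <- (hs_act_inv_r a R), !hs_act_ssub_iff in H1, H2. split; assumption.
Qed.

(* Distinct copies in an admissible family have distinct first halfspaces, all
   separating [x] from [y]; hence there are at most [d x y] of them. *)
Lemma admissible_copies_length gam x y S : gam <> [] -> Forall (is_halfspace adj) gam ->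
  admissible_copies act gam x y S -> length S <= d x y.
Proof.
  intros Hne Hhs (HS & Hcopy & Hdisj). destruct gam as [|P0 gam]; [congruence|].
  destruct (separating_halfspaces x y) as (L & HL & HinL).
  rewrite <- HL. rewrite <- (length_map (hd (P0 : hspace V)) S).
  apply NoDup_incl_length.
  - apply NoDup_map_NoDup_ForallPairs; [|exact HS].
    intros s t Hs Ht E. apply NNPP. intro Hst. apply (Hdisj s t Hs Ht Hst).
    destruct (Hcopy s Hs) as [[h ->] _]. destruct (Hcopy t Ht) as [[h' ->] _].
    exists (hs h P0), (hs h' P0). simpl in E |- *. auto.
  - intros P HP. apply in_map_iff in HP. destruct HP as (s & <- & Hs).
    destruct (Hcopy s Hs) as [[h ->] Hin]. simpl.
    destruct (Hin (hs h P0) (or_introl eq_refl)).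
    apply HinL; [apply hs_act_halfspace; inversion Hhs; assumption|assumption..].
Qed.

Lemma c_seg_spec gam x y : gam <> [] -> Forall (is_halfspace adj) gam ->
  (exists S, admissible_copies act gam x y S /\ length S = c_seg act gam x y) /\
  (forall S, admissible_copies act gam x y S -> length S <= c_seg act gam x y).
Proof.
  intros Hne Hhs. unfold c_seg. apply epsilon_spec.
  destruct (nat_greatest (fun n => exists S, admissible_copies act gam x y S /\ length S = n)
              (B := d x y)) as (n & Hn & Hmax).
  - exists 0, []. split; [|reflexivity].
    split; [constructor|]. split; intros; contradiction.
  - intros n (S & HS & <-). exact (admissible_copies_length Hne Hhs HS).
  - exists n. split; [exact Hn|]. intros S HS. exact (Hmax _ (ex_intro _ S (conj HS eq_refl))).
Qed.

Local Notation gp := (gpow mul one).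

Lemma gpow_succ_r a n : gp a (S n) = mul (gp a n) a.
Proof.
  induction n as [|n IH]; cbn [gpow]; [rewrite (g_one_r HG), (g_one_l HG); reflexivity|].
  cbn [gpow] in IH. rewrite IH at 1. apply (g_assoc HG).
Qed.

Lemma gpow_add a k m : gp a (k + m) = mul (gp a k) (gp a m).
Proof.
  induction k as [|k IH]; cbn [gpow plus]; [rewrite (g_one_l HG); reflexivity|].
  rewrite IH. apply (g_assoc HG).
Qed.

Definition min_displaced (g : G) (x : V) : Prop := forall y, d x (act g x) <= d y (act g y).

Section RaagLike.
Hypothesis Hraag : raag_like adj act.

Lemma raag_no_flip h P : is_halfspace adj P -> hs h (hcompl P) <> P.
Proof. intros HP E. apply (rl1 Hraag). eauto. Qed.

Lemma raag_nested h P : is_halfspace adj P -> nested P (hs h P).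
Proof. intro HP. apply NNPP. intro Htr. apply (rl2 Hraag). eauto. Qed.

Lemma raag_nested_flip h P : is_halfspace adj P -> nested P (hs h (hcompl P)).
Proof.
  intro HP. apply NNPP. intro Htr. apply (rl2 Hraag). exists P, h. split; [exact HP|].
  rewrite hs_act_compl in Htr. exact (transverse_compl_r Htr).
Qed.

Lemma raag_nested_tight h P P' : is_halfspace adj P -> is_halfspace adj P' ->
  tight_ssub adj P P' -> nested P (hs h (hcompl P')).
Proof.
  intros HP HP' Ht. apply NNPP. intro Htr. apply (rl3 Hraag). exists P, P', h.
  split; [exact HP|]. split; [exact HP'|]. split; [left; exact Ht|].
  rewrite hs_act_compl in Htr. exact (transverse_compl_r Htr).
Qed.

Lemma raag_no_tight_flip h P Q : is_halfspace adj P -> tight_ssub adj Q P -> hs h (hcompl P) <> Q.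
Proof.
  intros HP Ht E. apply (rl4 Hraag). exists (hcompl P), h.
  split; [apply halfspace_compl, HP|]. rewrite hcompl_involutive.
  replace (hs h P) with (hcompl Q); [apply tight_ssub_compl, Ht|].
  rewrite <- E, hs_act_compl. apply hcompl_involutive.
Qed.

Lemma translate_ssub_first_edge g x x1 : min_displaced g x -> adj x x1 ->
  d x1 (act g x) + 1 = d x (act g x) -> hssub (hs g (side x1 x)) (side x1 x).
Proof.
  intros Hmin Hxx1 Hd. set (P := side x1 x).
  assert (HP : is_halfspace adj P) by (exists x1, x; split; [exact (mg_sym HX Hxx1)|reflexivity]).
  pose proof (dc_adj Hxx1) as Hxx1d. pose proof (dc_adj (mg_sym HX Hxx1)) as Hx1xd.
  assert (Hgadj : adj (act g x) (act g x1)) by apply (act_adj Hact), Hxx1.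
  pose proof (dc_adj Hgadj) as Hgadjd.
  assert (HgP : hs g P = side (act g x1) (act g x)) by apply hs_act_side.
  assert (Px : ~ P x) by (unfold P, side; rewrite dc_refl; lia).
  assert (Pgx : P (act g x)) by (unfold P, side; rewrite (dc_sym _ x1), (dc_sym _ x); lia).
  assert (gPgx : ~ hs g P (act g x)) by (rewrite HgP; unfold side; rewrite dc_refl; lia).
  assert (gPgx1 : hs g P (act g x1)) by (apply hs_act_at; unfold P, side; rewrite dc_refl; lia).
  assert (Hflip : hs g P <> hcompl P).
  { intro E. apply (raag_no_flip (h := g) (halfspace_compl HP)).
    rewrite hcompl_involutive. exact E. }
  assert (gPx : ~ hs g P x).
  { intro H. destruct (classic (hs g P x1)) as [H1|H1].
    - rewrite HgP in H1. unfold side in H1.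
      pose proof (dc_triangle x1 (act g x) (act g x1)). pose proof (Hmin x1). lia.
    - apply Hflip. unfold P. rewrite (side_compl (mg_sym HX Hxx1)).
      apply halfspace_of_crossing; [apply hs_act_halfspace, HP|exact (mg_sym HX Hxx1)|..];
        assumption. }
  destruct (raag_nested g HP) as [H|[H|[H|H]]].
  - exfalso. exact (gPgx (H _ Pgx)).
  - exfalso. exact (gPx (H _ Px)).
  - exfalso. apply Hflip.
    assert (E : P = side (act g x) (act g x1)).
    { apply halfspace_of_crossing; [exact HP|exact (mg_sym HX Hgadj)| |exact Pgx].
      intro Hc. exact (H _ Hc gPgx1). }
    rewrite HgP, E, (side_compl Hgadj). reflexivity.
  - apply hssub_of_hsub; [apply hsub_compl_iff, H|].
    intro E. apply gPgx. rewrite E. exact Pgx.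
Qed.

(* Every vertex [u] on a geodesic from [x] to [g x] is again minimally displaced,
   and the crossing edge [(u, v)] starts a geodesic from [u] to [g u]. *)
Lemma translate_ssub_of_separating g x P : min_displaced g x -> is_halfspace adj P ->
  ~ P x -> P (act g x) -> hssub (hs g P) P.
Proof.
  intros Hmin HP Hx Hgx.
  destruct (walk_crossing (dc_walk x (act g x)) HP Hx Hgx)
    as (i & u & v & k & Hxu & Huv & Hvgx & Hn & ->).
  pose proof (dc_le Hxu). pose proof (dc_le Hvgx). pose proof (dc_adj Huv).
  pose proof (dc_act g x u). pose proof (Hmin u).
  pose proof (dc_triangle u (act g x) (act g u)). pose proof (dc_triangle v (act g x) (act g u)).
  pose proof (dc_triangle u v (act g u)). pose proof (dc_triangle u v (act g x)).
  apply translate_ssub_first_edge; [|exact Huv|lia].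
  intro y. pose proof (Hmin y). lia.
Qed.

Section Translation.
Variables (g : G) (o : V).
Hypothesis Hmin : min_displaced g o.

Definition orbit (s : nat) : V := act (gp g s) o.
Definition orbit_inv (s : nat) : V := act (gp (inv g) s) o.

Lemma orbit_0 : orbit 0 = o.
Proof. apply (act_one Hact). Qed.

Lemma orbit_S s : orbit (S s) = act g (orbit s).
Proof. apply (act_mul Hact). Qed.

Lemma orbit_add k m : orbit (k + m) = act (gp g k) (orbit m).
Proof. unfold orbit. rewrite gpow_add. apply (act_mul Hact). Qed.

Lemma act_orbit_inv_S s : act g (orbit_inv (S s)) = orbit_inv s.
Proof. unfold orbit_inv. cbn [gpow]. rewrite (act_mul Hact). apply act_inv_r. Qed.

Lemma hs_gpow_inv_orbit m Q k : hs (gp (inv g) m) Q (orbit k) <-> Q (orbit (k + m)).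
Proof.
  revert k. induction m as [|m IH]; intro k; cbn [gpow].
  - rewrite hs_act_one, Nat.add_0_r. reflexivity.
  - rewrite hs_act_mul, hs_act_inv_at, <- orbit_S, IH, Nat.add_succ_r. reflexivity.
Qed.

Lemma orbit_min_displaced m : min_displaced g (orbit m).
Proof.
  intro y. rewrite <- orbit_S. replace (S m) with (m + 1) by lia.
  rewrite orbit_add. unfold orbit at 1. rewrite dc_act, orbit_S, orbit_0. apply Hmin.
Qed.

Lemma translate_hsub_of_separating_orbit P N :
  is_halfspace adj P -> ~ P o -> P (orbit N) -> hsub (hs g P) P.
Proof.
  intros HP Ho HN. rewrite <- orbit_0 in Ho.
  destruct (nat_crossing (fun s => P (orbit s)) N Ho HN) as (m & Hm & HSm).
  rewrite orbit_S in HSm.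
  exact (proj1 (translate_ssub_of_separating (orbit_min_displaced m) HP Hm HSm)).
Qed.

Lemma translate_gpow_hsub P k : hsub (hs g P) P -> hsub (hs (gp g k) P) P.
Proof.
  intro H. induction k as [|k IH]; cbn [gpow]; [rewrite hs_act_one; apply hsub_refl|].
  rewrite hs_act_mul. exact (hsub_trans (hs_act_sub (a := g) IH) H).
Qed.

Lemma orbit_stays_in P N s : hsub (hs g P) P -> P (orbit N) -> N <= s -> P (orbit s).
Proof.
  intros H HN Hs. induction Hs as [|s _ IH]; [exact HN|].
  rewrite orbit_S. apply H, hs_act_at, IH.
Qed.

Lemma orbit_inv_stays_out P s : hsub (hs g P) P -> ~ P o -> ~ P (orbit_inv s).
Proof.
  intros H Ho. induction s as [|s IH].
  - unfold orbit_inv. cbn [gpow]. rewrite (act_one Hact). exact Ho.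
  - intro Hs. apply IH. rewrite <- act_orbit_inv_S. apply H, hs_act_at, Hs.
Qed.

Lemma translate_in_orbit_interval P k N : hsub (hs g P) P -> ~ P o -> P (act g o) -> k < N ->
  in_interval o (orbit N) (hs (gp g k) P).
Proof.
  intros H Ho Hgo Hk. split.
  - intro Hc. exact (Ho (translate_gpow_hsub k H Hc)).
  - replace N with (k + (N - k)) by lia. rewrite orbit_add. apply hs_act_at.
    apply (orbit_stays_in (N := 1)); [exact H|rewrite orbit_S, orbit_0; exact Hgo|lia].
Qed.

Definition axial (Q : hspace V) : Prop :=
  exists n, forall s, n <= s -> Q (orbit s) /\ ~ Q (orbit_inv s).

Lemma axial_of_hsub Q N : hsub (hs g Q) Q -> ~ Q o -> Q (orbit N) -> axial Q.
Proof.
  intros H Ho HN. exists N. intros s Hs.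
  split; [exact (orbit_stays_in H HN Hs)|exact (orbit_inv_stays_out s H Ho)].
Qed.

Lemma axial_comparable P Q : axial P -> axial Q -> nested P Q -> hsub P Q \/ hsub Q P.
Proof.
  intros [n1 H1] [n2 H2] Hn.
  destruct (H1 (n1 + n2)) as [HP1 HP2]; [lia|]. destruct (H2 (n1 + n2)) as [HQ1 HQ2]; [lia|].
  exact (nested_comparable _ _ Hn HP1 HQ1 HP2 HQ2).
Qed.

Lemma axial_hs_g Q : axial Q -> axial (hs g Q).
Proof.
  intros [n H]. exists (S n). intros [|s] Hs; [lia|]. split.
  - rewrite orbit_S. apply hs_act_at, H. lia.
  - rewrite <- (act_orbit_inv_S (S s)), hs_act_at. apply H. lia.
Qed.

Lemma axial_hs_inv_g Q : axial Q -> axial (hs (inv g) Q).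
Proof.
  intros [n H]. exists (S n). intros [|s] Hs; [lia|].
  rewrite !hs_act_inv_at, <- orbit_S, act_orbit_inv_S. split; apply H; lia.
Qed.

Lemma axial_hs_gpow_inv m Q : axial Q -> axial (hs (gp (inv g) m) Q).
Proof.
  intro H. induction m as [|m IH]; cbn [gpow]; [rewrite hs_act_one; exact H|].
  rewrite hs_act_mul. apply axial_hs_inv_g, IH.
Qed.

Section MaximalSegment.
Variable gam : list (hspace V).
Hypothesis Hgam : max_g_nested adj act g o gam.

(* [Phi i] is the paper's [Phi_i] for [i < len]; the default [fun _ => False] is never used. *)
Local Notation Phi i := (nth i gam (fun _ => False)).
Local Notation len := (length gam).
Local Notation r := (length gam - 1).

Lemma gam_nonempty : gam <> [].
Proof. exact (proj1 (proj1 (proj1 Hgam))). Qed.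

Lemma gam_halfspaces : Forall (is_halfspace adj) gam.
Proof. exact (proj1 (proj2 (proj1 (proj1 Hgam)))). Qed.

Lemma gam_chain : tight_chain adj gam.
Proof. exact (proj2 (proj2 (proj1 (proj1 Hgam)))). Qed.

Lemma gam_in_interval : seg_in o (act g o) gam.
Proof. exact (proj1 (proj2 (proj1 Hgam))). Qed.

Lemma len_pos : 0 < len.
Proof. apply Nat.neq_0_lt_0. intro E. exact (gam_nonempty (proj1 (length_zero_iff_nil gam) E)). Qed.

Lemma r_lt : r < len.
Proof. pose proof len_pos. lia. Qed.

Lemma Phi_halfspace i : i < len -> is_halfspace adj (Phi i).
Proof.
  intro Hi. pose proof gam_halfspaces as H. rewrite Forall_forall in H. apply H, nth_In, Hi.
Qed.

Lemma Phi_interval i : i < len -> ~ Phi i o /\ Phi i (act g o).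
Proof. intro Hi. apply gam_in_interval, nth_In, Hi. Qed.

Lemma Phi_tight i : S i < len -> tight_ssub adj (Phi (S i)) (Phi i).
Proof. apply tight_chain_nth, gam_chain. Qed.

Lemma Phi_antitone i j : i <= j -> j < len -> hsub (Phi j) (Phi i).
Proof.
  intros Hij Hj. induction Hij as [|j Hij IH]; [apply hsub_refl|].
  exact (hsub_trans (proj1 (proj1 (Phi_tight Hj))) (IH ltac:(lia))).
Qed.

Lemma last_gam : last gam (fun _ => False) = Phi r.
Proof. apply last_nth, gam_nonempty. Qed.

Lemma hs_first_ssub_last : hssub (hs g (Phi 0)) (Phi r).
Proof.
  rewrite <- last_gam, <- seg_gt_seg_act by exact gam_nonempty.
  exact (proj2 (proj2 (proj1 Hgam))).
Qed.

Lemma Phi_translate_ssub i j : i < len -> j < len -> hssub (hs g (Phi j)) (Phi i).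
Proof.
  intros Hi Hj. apply (hssub_trans_r (hs_act_sub (Phi_antitone (Nat.le_0_l j) Hj))).
  exact (hssub_trans_l hs_first_ssub_last (Phi_antitone (i := i) (j := r) ltac:(lia) r_lt)).
Qed.

Lemma Phi_hsub_translate i : i < len -> hsub (hs g (Phi i)) (Phi i).
Proof. intro Hi. exact (proj1 (Phi_translate_ssub Hi Hi)). Qed.

Lemma Phi_axial i : i < len -> axial (Phi i).
Proof.
  intro Hi. destruct (Phi_interval Hi) as [Ho Hgo].
  apply (axial_of_hsub 1); [exact (Phi_hsub_translate Hi)|exact Ho|].
  rewrite orbit_S, orbit_0. exact Hgo.
Qed.

Lemma longer_g_nested_absurd gam' :
  g_nested adj act g o gam' -> seg_contains gam' gam -> len < length gam' -> False.
Proof. intros Hn Hc Hlt. rewrite (proj2 Hgam gam' Hn Hc) in Hlt. lia. Qed.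

Lemma no_tight_extension_below R : is_halfspace adj R -> tight_ssub adj R (Phi r) ->
  ~ R o -> R (act g o) -> hssub (hs g (Phi 0)) R -> False.
Proof.
  intros HR Ht Ro Rgo Hgt.
  assert (Hne : gam ++ [R] <> []) by (intro E; exact (app_cons_not_nil gam [] R (eq_sym E))).
  apply (longer_g_nested_absurd (gam' := gam ++ [R])).
  - split; [split; [exact Hne|split]|split].
    + apply Forall_app. split; [exact gam_halfspaces|repeat constructor; exact HR].
    + apply (tight_chain_snoc (fun _ => False)); [exact gam_nonempty|exact gam_chain|].
      rewrite last_gam. exact Ht.
    + intros P HP. apply in_app_or in HP.
      destruct HP as [HP|[<-|[]]]; [exact (gam_in_interval _ HP)|split; assumption].
    + rewrite (seg_gt_seg_act _ _ (fun _ => False) Hne), app_nth1, last_last by exact len_pos.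
      exact Hgt.
  - intros P HP. apply in_or_app. left. exact HP.
  - rewrite length_app. simpl. lia.
Qed.

Lemma no_tight_extension_above R : is_halfspace adj R -> tight_ssub adj (Phi 0) R ->
  ~ R o -> R (act g o) -> hssub (hs g R) (Phi r) -> False.
Proof.
  intros HR Ht Ro Rgo Hgt.
  apply (longer_g_nested_absurd (gam' := R :: gam)).
  - split; [split; [discriminate|split]|split].
    + constructor; [exact HR|exact gam_halfspaces].
    + exact (tight_chain_cons (fun _ => False) gam_nonempty gam_chain Ht).
    + intros P [<-|HP]; [split; assumption|exact (gam_in_interval _ HP)].
    + rewrite (seg_gt_seg_act _ _ (fun _ => False)) by discriminate.
      rewrite last_cons_nonempty, last_gam by exact gam_nonempty. exact Hgt.
  - intros P HP. right. exact HP.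
  - simpl. lia.
Qed.

(* A maximal halfspace between [X] and [Phi_r] could be appended to [gam]; if [X] misses
   [g o], the [g]-preimage of a minimal one between [Phi_0] and [g^-1 X] could be prepended. *)
Lemma no_halfspace_between_in X : is_halfspace adj X -> X (act g o) ->
  hssub X (Phi r) -> hssub (hs g (Phi 0)) X -> False.
Proof.
  intros HXh Xgo HXr HgX.
  destruct (separating_halfspaces o (act g o)) as (L & _ & HL).
  destruct (Phi_interval r_lt) as [Hro _].
  destruct (finite_maximal (@hssub V) L
              (fun R => is_halfspace adj R /\ hssub R (Phi r) /\ hsub X R))
    as (m & (Hm & Hmr & HXm) & Hmax).
  - apply hssub_irrefl.
  - intros P Q R HPQ HQR. exact (hssub_trans_l HPQ (proj1 HQR)).
  - intros R (HR & HRr & HXR). apply HL; [exact HR| |exact (HXR _ Xgo)].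
    intro Ro. exact (Hro (proj1 HRr _ Ro)).
  - exists X. split; [exact HXh|split; [exact HXr|apply hsub_refl]].
  - apply (no_tight_extension_below Hm); [split; [exact Hmr|]| |exact (HXm _ Xgo)|].
    + intros (R & HR & HmR & HRr). apply (Hmax R); [|exact HmR].
      split; [exact HR|split; [exact HRr|exact (hsub_trans HXm (proj1 HmR))]].
    + intro mo. exact (Hro (proj1 Hmr _ mo)).
    + exact (hssub_trans_l HgX HXm).
Qed.

Lemma no_halfspace_between_out X : is_halfspace adj X -> ~ X (act g o) ->
  hssub X (Phi r) -> hssub (hs g (Phi 0)) X -> False.
Proof.
  intros HXh Xgo HXr HgX.
  set (T := hs (inv g) X).
  assert (HT : forall z, T z <-> X (act g z)) by (intro z; apply hs_act_inv_at).
  assert (H0T : hssub (Phi 0) T).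
  { rewrite <- (hs_act_ssub_iff g). unfold T. rewrite hs_act_inv_r. exact HgX. }
  destruct (separating_halfspaces o (act g o)) as (L & _ & HL).
  destruct (Phi_interval len_pos) as [_ H0g].
  destruct (finite_maximal (fun P Q => hssub Q P) L
              (fun R => is_halfspace adj R /\ hssub (Phi 0) R /\ hsub R T))
    as (m & (Hm & H0m & HmT) & Hmin').
  - apply hssub_irrefl.
  - intros P Q R HPQ HQR. exact (hssub_trans_l HQR (proj1 HPQ)).
  - intros R (HR & H0R & HRT). apply HL; [exact HR| |exact (proj1 H0R _ H0g)].
    intro Ro. exact (Xgo (proj1 (HT o) (HRT _ Ro))).
  - exists T. split; [apply hs_act_halfspace, HXh|split; [exact H0T|apply hsub_refl]].
  - apply (no_tight_extension_above Hm); [split; [exact H0m|]| |exact (proj1 H0m _ H0g)|].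
    + intros (R & HR & H0R & HRm). apply (Hmin' R); [|exact HRm].
      split; [exact HR|split; [exact H0R|exact (hsub_trans (proj1 HRm) HmT)]].
    + intro mo. exact (Xgo (proj1 (HT o) (HmT _ mo))).
    + apply (hssub_trans_r (hs_act_sub (a := g) HmT)). unfold T. rewrite hs_act_inv_r. exact HXr.
Qed.

Lemma no_halfspace_between X : is_halfspace adj X ->
  hssub X (Phi r) -> hssub (hs g (Phi 0)) X -> False.
Proof.
  intro HXh. destruct (classic (X (act g o))) as [Xgo|Xgo].
  - exact (no_halfspace_between_in HXh Xgo).
  - exact (no_halfspace_between_out HXh Xgo).
Qed.

Section NormalizedReversedCopy.
Variable h : G.
Local Notation Psi j := (hs h (hcompl (Phi j))).
Hypothesis HPsi0_below : hssub (Psi 0) (Phi 0).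
Hypothesis HPsi0_above : hssub (hs g (Phi 0)) (Psi 0).
Hypothesis HPsi_axial : forall j, j < len -> axial (Psi j).

Lemma Psi_halfspace j : j < len -> is_halfspace adj (Psi j).
Proof. intro Hj. apply hs_act_halfspace, halfspace_compl, Phi_halfspace, Hj. Qed.

Lemma Psi_tight j : S j < len -> tight_ssub adj (Psi j) (Psi (S j)).
Proof. intro Hj. apply hs_act_tight_ssub, tight_ssub_compl, Phi_tight, Hj. Qed.

(* Conditions (i)-(iv) force [Psi j] to sit just below [Phi j], interleaving the two chains. *)
Lemma Psi_ssub_Phi j : j < len -> hssub (Psi j) (Phi j) /\ hsub (Psi 0) (Psi j).
Proof.
  induction j as [|j IH]; intro Hj; [split; [exact HPsi0_below|apply hsub_refl]|].
  assert (Hj' : j < len) by lia. destruct (IH Hj') as [Hj_below H0j].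
  pose proof (Phi_halfspace Hj) as HPS. pose proof (Phi_halfspace Hj') as HP.
  assert (Hnext : hssub (Psi j) (Phi (S j))).
  { destruct (axial_comparable (Phi_axial Hj) (HPsi_axial Hj')
                (raag_nested_tight h HPS HP (Phi_tight Hj))) as [H|H].
    - exfalso. apply (tight_ssub_between (Phi_tight Hj) (Psi_halfspace Hj')); [|exact Hj_below].
      apply hssub_of_hsub; [exact H|].
      intro E. exact (raag_no_tight_flip HP (Phi_tight Hj) (eq_sym E)).
    - apply hssub_of_hsub; [exact H|]. exact (raag_no_tight_flip HP (Phi_tight Hj)). }
  split; [|exact (hsub_trans H0j (proj1 (proj1 (Psi_tight Hj))))].
  destruct (axial_comparable (Phi_axial Hj) (HPsi_axial Hj) (raag_nested_flip h HPS)) as [H|H].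
  - exfalso. apply (tight_ssub_between (Psi_tight Hj) HPS); [exact Hnext|].
    apply hssub_of_hsub; [exact H|]. intro E. exact (raag_no_flip HPS (eq_sym E)).
  - apply hssub_of_hsub; [exact H|]. exact (raag_no_flip HPS).
Qed.

Lemma normalized_reversed_copy_absurd : False.
Proof.
  destruct (Psi_ssub_Phi r_lt) as [Hr H0r].
  exact (no_halfspace_between (Psi_halfspace r_lt) Hr (hssub_trans_l HPsi0_above H0r)).
Qed.

End NormalizedReversedCopy.

Lemma Phi0_ssub_cases h : axial (hs h (hcompl (Phi 0))) ->
  hssub (Phi 0) (hs h (hcompl (Phi 0))) \/ hssub (hs h (hcompl (Phi 0))) (Phi 0).
Proof.
  intro Hax. pose proof (Phi_halfspace len_pos) as HP0.
  destruct (axial_comparable (Phi_axial len_pos) Hax (raag_nested_flip h HP0)) as [H|H];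
    [left|right]; apply hssub_of_hsub; try exact H.
  - intro E. exact (raag_no_flip HP0 (eq_sym E)).
  - exact (raag_no_flip HP0).
Qed.

(* For [h] or for [g h], the first halfspace lies strictly between [g Phi_0] and [Phi_0]. *)
Lemma reversed_copy_unit_interval_absurd h :
  ~ hs h (hcompl (Phi 0)) o -> hs h (hcompl (Phi 0)) (act g o) ->
  (forall j, j < len -> axial (hs h (hcompl (Phi j)))) -> False.
Proof.
  intros Ho Hgo Hax. destruct (Phi_interval len_pos) as [H0o H0g].
  assert (Hax_g : forall j, j < len -> axial (hs (mul g h) (hcompl (Phi j)))).
  { intros j Hj. rewrite hs_act_mul. apply axial_hs_g, Hax, Hj. }
  assert (Hax_inv : axial (hs (mul (inv g) h) (hcompl (Phi 0)))).
  { rewrite hs_act_mul. apply axial_hs_inv_g, Hax, len_pos. }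
  destruct (Phi0_ssub_cases (Hax 0 len_pos)) as [HT|HT].
  - apply (normalized_reversed_copy_absurd (h := mul g h)); [| |exact Hax_g];
      rewrite hs_act_mul; [|apply hs_act_ssub, HT].
    destruct (Phi0_ssub_cases (Hax_g 0 len_pos)) as [H|H]; rewrite hs_act_mul in H;
      [exfalso|exact H].
    exact (Ho (proj1 (hs_act_at g _ o) (proj1 H _ H0g))).
  - apply (normalized_reversed_copy_absurd (h := h)); [exact HT| |exact Hax].
    destruct (Phi0_ssub_cases Hax_inv) as [H|H]; rewrite hs_act_mul in H; [|exfalso].
    + rewrite <- (hs_act_inv_r g (hs h _)). apply hs_act_ssub, H.
    + exact (H0o (proj1 H _ (proj2 (hs_act_inv_at g _ o) Hgo))).
Qed.

Lemma reversed_copy_shift h N :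
  (forall j, j < len -> in_interval o (orbit N) (hs h (hcompl (Phi j)))) ->
  exists h1, ~ hs h1 (hcompl (Phi 0)) o /\ hs h1 (hcompl (Phi 0)) (act g o) /\
    forall j, j < len -> axial (hs h1 (hcompl (Phi j))).
Proof.
  intro Hin.
  assert (Hax : forall j, j < len -> axial (hs h (hcompl (Phi j)))).
  { intros j Hj. destruct (Hin j Hj) as [Ho HN].
    assert (HQ : is_halfspace adj (hs h (hcompl (Phi j))))
      by apply hs_act_halfspace, halfspace_compl, Phi_halfspace, Hj.
    exact (axial_of_hsub N (translate_hsub_of_separating_orbit N HQ Ho HN) Ho HN). }
  destruct (Hin 0 len_pos) as [Ho HN]. rewrite <- orbit_0 in Ho.
  destruct (nat_crossing (fun s => hs h (hcompl (Phi 0)) (orbit s)) N Ho HN) as (m & Hm & HSm).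
  exists (mul (gp (inv g) m) h). rewrite !hs_act_mul. split; [|split].
  - rewrite <- orbit_0, hs_gpow_inv_orbit. exact Hm.
  - rewrite <- orbit_0, <- orbit_S, hs_gpow_inv_orbit. exact HSm.
  - intros j Hj. rewrite hs_act_mul. apply axial_hs_gpow_inv, Hax, Hj.
Qed.

Lemma no_reversed_copy h N : ~ seg_in o (orbit N) (seg_act act h (seg_rev gam)).
Proof.
  intro Hin. destruct (reversed_copy_shift (h := h) (N := N)) as (h1 & Ho & Hgo & Hax).
  - intros j Hj. apply Hin. unfold seg_act, seg_rev.
    apply in_map, in_map, (proj1 (in_rev _ _)), nth_In, Hj.
  - exact (reversed_copy_unit_interval_absurd Ho Hgo Hax).
Qed.

Lemma c_seg_rev_orbit N : c_seg act (seg_rev gam) o (orbit N) = 0.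
Proof.
  assert (Hne : seg_rev gam <> []).
  { unfold seg_rev. intro E. apply gam_nonempty.
    rewrite <- (rev_involutive gam), (map_eq_nil _ _ E). reflexivity. }
  assert (Hhs : Forall (is_halfspace adj) (seg_rev gam)).
  { unfold seg_rev. rewrite Forall_map, Forall_forall. intros P HP.
    apply halfspace_compl. rewrite <- in_rev in HP.
    pose proof gam_halfspaces as H. rewrite Forall_forall in H. exact (H P HP). }
  destruct (c_seg_spec o (orbit N) Hne Hhs) as [(S & (_ & HS & _) & <-) _].
  destruct S as [|s S]; [reflexivity|exfalso].
  destruct (HS s (or_introl eq_refl)) as [[h ->] Hin]. exact (no_reversed_copy h Hin).
Qed.

Definition orbit_copy (k : nat) : list (hspace V) := seg_act act (gp g k) gam.

Lemma In_orbit_copy k Q : In Q (orbit_copy k) -> exists i, i < len /\ Q = hs (gp g k) (Phi i).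
Proof.
  unfold orbit_copy, seg_act. intro HQ. apply in_map_iff in HQ. destruct HQ as (P & <- & HP).
  destruct (In_nth _ _ (fun _ => False) HP) as (i & Hi & <-). eauto.
Qed.

Lemma orbit_copy_ssub k k' i j : k < k' -> i < len -> j < len ->
  hssub (hs (gp g k') (Phi j)) (hs (gp g k) (Phi i)).
Proof.
  intros Hk Hi Hj. replace k' with (k + S (k' - S k)) by lia.
  rewrite gpow_add, hs_act_mul. apply hs_act_ssub.
  rewrite gpow_succ_r, hs_act_mul.
  apply (hssub_trans_r (translate_gpow_hsub _ (hs_act_sub (Phi_hsub_translate Hj)))).
  exact (Phi_translate_ssub Hi Hj).
Qed.

Lemma orbit_copies_no_overlap k k' : k <> k' -> ~ seg_overlap (orbit_copy k) (orbit_copy k').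
Proof.
  intros Hkk' (P & Q & HP & HQ & HPQ).
  destruct (In_orbit_copy _ _ HP) as (i & Hi & ->).
  destruct (In_orbit_copy _ _ HQ) as (j & Hj & ->).
  apply (hssub_not_overlap (P := hs (gp g k) (Phi i)) (Q := hs (gp g k') (Phi j))); [|exact HPQ].
  destruct (Nat.lt_gt_cases k k') as [[Hlt|Hlt] _]; [exact Hkk'|right|left];
    apply orbit_copy_ssub; assumption.
Qed.

Lemma orbit_copy_injective k k' : orbit_copy k = orbit_copy k' -> k = k'.
Proof.
  intro E. apply NNPP. intro Hkk'. apply (orbit_copies_no_overlap Hkk').
  assert (HP : In (hs (gp g k) (Phi 0)) (orbit_copy k)) by apply in_map, nth_In, len_pos.
  exists (hs (gp g k) (Phi 0)), (hs (gp g k) (Phi 0)).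
  rewrite <- E. split; [exact HP|split; [exact HP|left; reflexivity]].
Qed.

Lemma orbit_copy_in_interval k N : k < N -> seg_in o (orbit N) (orbit_copy k).
Proof.
  intros Hk Q HQ. destruct (In_orbit_copy _ _ HQ) as (i & Hi & ->).
  destruct (Phi_interval Hi) as [Ho Hgo].
  exact (translate_in_orbit_interval (Phi_hsub_translate Hi) Ho Hgo Hk).
Qed.

Lemma c_seg_orbit_ge N : N <= c_seg act gam o (orbit N).
Proof.
  replace N with (length (map orbit_copy (seq 0 N))) at 1
    by (rewrite length_map, length_seq; reflexivity).
  apply (proj2 (c_seg_spec o (orbit N) gam_nonempty gam_halfspaces)).
  split; [|split].
  - apply NoDup_map_NoDup_ForallPairs; [|apply seq_NoDup].
    intros k k' _ _. apply orbit_copy_injective.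
  - intros s Hs. apply in_map_iff in Hs. destruct Hs as (k & <- & Hk). apply in_seq in Hk.
    split; [exists (gp g k); reflexivity|apply orbit_copy_in_interval; lia].
  - intros s t Hs Ht Hst. apply in_map_iff in Hs, Ht.
    destruct Hs as (k & <- & _). destruct Ht as (k' & <- & _).
    apply orbit_copies_no_overlap. intros ->. exact (Hst eq_refl).
Qed.

Lemma phi_gpow_ge N : (INR N <= phi act gam o (gp g N))%R.
Proof.
  unfold phi, omega. change (act (gp g N) o) with (orbit N).
  rewrite c_seg_rev_orbit, INR_0, Rminus_0_r. apply le_INR, c_seg_orbit_ge.
Qed.

End MaximalSegment.
End Translation.
End RaagLike.

Lemma min_displaced_of_delta g o : dc adj o (act g o) = delta adj act g -> min_displaced g o.
Proof.
  intros Ho y. rewrite Ho. unfold delta.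
  apply (epsilon_spec (inhabits 0) (fun n => (exists x, d x (act g x) = n) /\
                                            forall x, n <= d x (act g x))).
  destruct (nat_least (fun n => exists x, d x (act g x) = n)) as (n & Hn & Hleast); [eauto|].
  exists n. split; [exact Hn|]. intro x. apply Hleast. eauto.
Qed.

End Action.
End MedianGraph.

Local Open Scope R_scope.

Lemma Un_cv_ge (u : nat -> R) (c L : R) : (forall n, c <= u n) -> Un_cv u L -> c <= L.
Proof.
  intros Hu HL. apply (Rle_cv_lim (Un := fun _ => c) Hu); [|exact HL].
  intros eps Heps. exists 0%nat. intros n _. unfold Rdist. rewrite Rminus_diag, Rabs_R0. exact Heps.
Qed.

Theorem theorem5p6
  (V : Type) (adj : V -> V -> Prop) (HX : median_graph adj)
  (G : Type) (mul : G -> G -> G) (one : G) (inv : G -> G)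
  (HG : is_group mul one inv)
  (act : G -> V -> V) (Hact : is_action mul one adj act)
  (Hraag : raag_like adj act)
  (g : G) (Hhyp : hyperbolic adj act g)
  (o : V) (Ho : dc adj o (act g o) = delta adj act g)
  (gam : list (hspace V)) (Hgam : max_g_nested adj act g o gam) :
  let u := fun n : nat =>
             phi act gam o (gpow mul one g (S n)) / INR (S n) in
  (forall L, Un_cv u L -> 1 <= L) /\
  (forall eps, 0 < eps -> exists N, forall n, (n >= N)%nat -> 1 - eps <= u n).
Proof.
  intro u.
  assert (Hu : forall n, 1 <= u n).
  { intro n. unfold u.
    pose proof (phi_gpow_ge HX HG Hact Hraag (min_displaced_of_delta adj act g o Ho) Hgam (S n)).
    pose proof (lt_0_INR (S n) (Nat.lt_0_succ n)).
    apply (Rmult_le_reg_r (INR (S n))); [assumption|].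
    unfold Rdiv. rewrite Rmult_assoc, Rinv_l, Rmult_1_l, Rmult_1_r; lra. }
  split.
  - intros L HL. exact (Un_cv_ge Hu HL).
  - intros eps Heps. exists 0%nat. intros n _. pose proof (Hu n). lra.
Qed.
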